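(* Let $n\geq 5$, let $P=(Y,X,Z)$ be a path of length two in $AQ_n$, and let $U\in N_{AQ_n}(P)$. Then $|N_{AQ_n}(\{U,X,Y,Z\})|\geq 8n-31$. If moreover $Z=\overline{X}_n$, then $|N_{AQ_n}(\{U,X,Y,Z\})|\geq 8n-29$.
   Context: The $n$-dimensional augmented cube $AQ_n$ has vertex set $\{0,1\}^n$, vertices written as strings $X=x_nx_{n-1}\cdots x_1$. For $1\le i\le n$ let $X_i=x_n\cdots x_{i+1}\bar x_i x_{i-1}\cdots x_1$ (flip bit $i$) and $\overline{X}_i=x_n\cdots x_{i+1}\bar x_i\bar x_{i-1}\cdots\bar x_1$ (flip bits $i,\dots,1$), where $\bar x=1-x$. Two distinct vertices $X,Y$ are adjacent iff $Y=X_i$ for some $1\le i\le n$ or $Y=\overline{X}_i$ for some $2\le i\le n$. For a vertex set (or subgraph) $T$, $N_{AQ_n}(T)=\bigcup_{V\in T}N_{AQ_n}(V)\setminus T$, where $N_{AQ_n}(V)$ is the neighbor set of $V$. *)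

From mathcomp Require Import all_boot.
Set Implicit Arguments. Unset Strict Implicit. Unset Printing Implicit Defensive.

(* Vertices of AQ_n: binary strings x_n ... x_1, encoded as functions
   'I_n -> bool, where bit x_i (1 <= i <= n) is stored at index i-1. *)
Definition vtx (n : nat) := {ffun 'I_n -> bool}.

(* X_i : flip bit i (1-based). *)
Definition flip1 n (X : vtx n) (i : nat) : vtx n :=
  [ffun j : 'I_n => if j.+1 == i then ~~ X j else X j].

(* \overline{X}_i : flip bits i, i-1, ..., 1 (1-based). *)
Definition flipc n (X : vtx n) (i : nat) : vtx n :=
  [ffun j : 'I_n => if j.+1 <= i then ~~ X j else X j].

Definition AQadj n (X Y : vtx n) : bool :=
  (X != Y) &&
  ([exists i : 'I_n, Y == flip1 X i.+1] ||
   [exists i : 'I_n, (2 <= i.+1) && (Y == flipc X i.+1)]).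

Definition NAQ n (T : {set vtx n}) : {set vtx n} :=
  [set V | (V \notin T) && [exists W in T, AQadj W V]].

From mathcomp Require Import all_boot zify.
Set Implicit Arguments. Unset Strict Implicit. Unset Printing Implicit Defensive.

(* The theorem is the case |A| = 4 of an isoperimetric bound valid for every
   nonempty vertex set A of AQ_n, proved by induction on n:
     2 |N(A)| >= 4 |A| n + 2 q(A) + 6 - 3 |A|^2 - 5 |A|,
   where q(A) counts the w in A whose complement (all n bits flipped) is also
   in A.  Split A by its top bit into two copies of AQ_{n-1}.  If both halves
   are nonempty, the neighbourhoods of the halves inside their copies are
   disjoint parts of N(A), and the induction hypotheses add up.  If A lies in
   one copy, N(A) also contains the images of A in the other copy under the
   two edges X_n and \overline{X}_n, i.e. 2|A| - q vertices of the smaller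
   cube; this pays for the increase of n.  For a path (Y, X, Z) with
   Z = \overline{X}_n both X and Z count in q, which gives the second bound. *)

Section Layers.
Variable n : nat.
Implicit Types (V W : vtx n.+1) (A B : {set vtx n.+1}).

Definition vlow V : vtx n := [ffun j => V (widen_ord (leqnSn n) j)].
Definition vtop V : bool := V ord_max.

Lemma vlow_vtop_inj V W : vlow V = vlow W -> vtop V = vtop W -> V = W.
Proof.
move=> Elow Etop; apply/ffunP => j; case: (ltnP j n) => [jn | nj].
  have -> : j = widen_ord (leqnSn n) (Ordinal jn) by apply/val_inj.
  by have := congr1 (fun f : vtx n => f (Ordinal jn)) Elow; rewrite !ffunE.
have -> : j = ord_max by apply/val_inj => /=; have := ltn_ord j; lia.
exact: Etop.
Qed.

Lemma vlow_flip1 V i : vlow (flip1 V i) = flip1 (vlow V) i.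
Proof. by apply/ffunP => j; rewrite !ffunE. Qed.

Lemma vlow_flipc V i : vlow (flipc V i) = flipc (vlow V) i.
Proof. by apply/ffunP => j; rewrite !ffunE. Qed.

Lemma vtop_flip1 V i : i <= n -> vtop (flip1 V i) = vtop V.
Proof. by move=> le_in; rewrite /vtop ffunE /= gtn_eqF. Qed.

Lemma vtop_flipc V i : i <= n -> vtop (flipc V i) = vtop V.
Proof. by move=> le_in; rewrite /vtop ffunE /= ltnNge le_in. Qed.

Lemma vtop_flip1_top V : vtop (flip1 V n.+1) = ~~ vtop V.
Proof. by rewrite /vtop ffunE /= eqxx. Qed.

Lemma vtop_flipc_top V : vtop (flipc V n.+1) = ~~ vtop V.
Proof. by rewrite /vtop ffunE /= leqnn. Qed.

Lemma vlow_flip1_top V : vlow (flip1 V n.+1) = vlow V.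
Proof. by apply/ffunP => j; rewrite !ffunE /= eqSS ltn_eqF. Qed.

Lemma vlow_flipc_top V : vlow (flipc V n.+1) = flipc (vlow V) n.
Proof. by apply/ffunP => j; rewrite !ffunE /= ltnS ltnW // ltn_ord. Qed.

Lemma AQadj_lift V w : AQadj (vlow V) w ->
  exists W, [/\ AQadj V W, vlow W = w & vtop W = vtop V].
Proof.
case/andP=> neq_w /orP[/existsP[i /eqP def_w] | /existsP[i /andP[i_ge2 /eqP def_w]]];
  subst w.
  exists (flip1 V i.+1); rewrite vlow_flip1 vtop_flip1 //; split=> //.
  apply/andP; split; first by apply: contraNneq neq_w => E; rewrite {1}E vlow_flip1.
  by apply/orP; left; apply/existsP; exists (widen_ord (leqnSn n) i).
exists (flipc V i.+1); rewrite vlow_flipc vtop_flipc //; split=> //.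
apply/andP; split; first by apply: contraNneq neq_w => E; rewrite {1}E vlow_flipc.
apply/orP; right; apply/existsP; exists (widen_ord (leqnSn n) i).
by rewrite /= i_ge2 eqxx.
Qed.

Lemma AQadj_flip1_top V : AQadj V (flip1 V n.+1).
Proof.
apply/andP; split.
  by apply/eqP => /(congr1 vtop); rewrite vtop_flip1_top; case: (vtop V).
by apply/orP; left; apply/existsP; exists ord_max.
Qed.

Lemma AQadj_flipc_top V : AQadj V (flipc V n.+1).
Proof.
have [n0 | n_gt0] := posnP n.
  have -> : flipc V n.+1 = flip1 V n.+1.
    apply/ffunP => j; have j0 : nat_of_ord j = 0 by have := ltn_ord j; lia.
    by rewrite !ffunE j0 (_ : 1 == n.+1) //; apply/eqP; lia.
  exact: AQadj_flip1_top.
apply/andP; split.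
  by apply/eqP => /(congr1 vtop); rewrite vtop_flipc_top; case: (vtop V).
by apply/orP; right; apply/existsP; exists ord_max; rewrite /= ltnS n_gt0 eqxx.
Qed.

Definition layer (b : bool) B : {set vtx n} := vlow @: [set V in B | vtop V == b].

Lemma mem_layer b B V : V \in B -> vtop V = b -> vlow V \in layer b B.
Proof. by move=> VB topV; apply/imsetP; exists V; rewrite // inE VB topV eqxx. Qed.

Lemma card_layer b B : #|layer b B| = #|[set V in B | vtop V == b]|.
Proof.
apply: card_in_imset => V W; rewrite !inE => /andP[_ /eqP topV] /andP[_ /eqP topW].
by move=> /vlow_vtop_inj; apply; rewrite topV topW.
Qed.

Lemma card_layer_all b B : {in B, forall V, vtop V = b} -> #|layer b B| = #|B|.
Proof.
move=> topB; rewrite card_layer; apply: eq_card => V; rewrite inE.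
by have [/topB-> | _] := boolP (V \in B); rewrite ?eqxx.
Qed.

Lemma card_layers b B : #|B| = #|layer b B| + #|layer (~~ b) B|.
Proof.
rewrite !card_layer -(cardsID [set V | vtop V == b] B); congr (_ + _); apply: eq_card.
  by move=> V; rewrite !inE andbC.
by move=> V; rewrite !inE; case: (vtop V); case: b; rewrite ?andbF ?andbT.
Qed.

Lemma card_layer_eq0 b B : #|layer b B| = 0 -> {in B, forall V, vtop V = ~~ b}.
Proof.
move=> /eqP; rewrite cards_eq0 => /eqP layer0 V VB.
case: (eqVneq (vtop V) b) => [topV | ]; last by case: (vtop V); case: (b).
by have := mem_layer VB topV; rewrite layer0 inE.
Qed.

Lemma NAQ_layer b B : NAQ (layer b B) \subset layer b (NAQ B).
Proof.
apply/subsetP => w; rewrite inE => /andP[w_out /existsP[w' /andP[/imsetP[V]]]].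
rewrite inE => /andP[VB /eqP topV] -> /AQadj_lift[W [adjVW lowW topW]].
rewrite -lowW; apply: mem_layer; last by rewrite topW.
rewrite inE; apply/andP; split; last by apply/existsP; exists V; rewrite VB.
by apply: contra w_out => WB; rewrite -lowW mem_layer // topW.
Qed.

Lemma layer_NAQ_opposite b B : {in B, forall V, vtop V = b} ->
  layer b B :|: [set flipc w n | w in layer b B] \subset layer (~~ b) (NAQ B).
Proof.
move=> topB.
have NAQ_top V W : V \in B -> AQadj V W -> vtop W = ~~ vtop V ->
    vlow W \in layer (~~ b) (NAQ B).
  move=> VB adjV topf; apply: mem_layer; last by rewrite topf topB.
  rewrite inE; apply/andP; split; last by apply/existsP; exists V; rewrite VB.
  by apply/negP => /topB; rewrite topf topB //; case: b {topB}.
apply/subsetP => w; rewrite inE => /orP[] /imsetP[V].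
  rewrite inE => /andP[VB _] ->; rewrite -(vlow_flip1_top V).
  by apply: (NAQ_top V); rewrite // ?AQadj_flip1_top ?vtop_flip1_top.
case/imsetP=> W; rewrite inE => /andP[WB _] -> ->; rewrite -vlow_flipc_top.
by apply: (NAQ_top W); rewrite // ?AQadj_flipc_top ?vtop_flipc_top.
Qed.

End Layers.

Lemma flipcK n i : involutive (@flipc n ^~ i).
Proof.
by move=> X /=; apply/ffunP => j; rewrite !ffunE; case: ifP => ji; rewrite ?ji ?negbK.
Qed.

(* [flipc w n] flips all n bits of w: it is the antipode of w. *)
Definition antipodal n (A : {set vtx n}) := [set w in A | flipc w n \in A].

Lemma card_antipodal_le n (A : {set vtx n}) : #|antipodal A| <= #|A|.
Proof. by apply/subset_leq_card/subsetP => w; rewrite inE => /andP[]. Qed.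

Lemma card_setU_antipodes n (A : {set vtx n}) :
  #|A :|: [set flipc w n | w in A]| + #|antipodal A| = 2 * #|A|.
Proof.
have -> : antipodal A = A :&: [set flipc w n | w in A].
  apply/setP => w; rewrite !inE; congr (_ && _); apply/idP/imsetP.
    by move=> wA; exists (flipc w n); rewrite ?flipcK.
  by case=> x xA ->; rewrite flipcK.
by rewrite cardsUI card_imset ?addnn ?mul2n //; exact/inv_inj/flipcK.
Qed.

Lemma antipodal_top0 n b (A : {set vtx n.+1}) :
  {in A, forall V, vtop V = b} -> #|antipodal A| = 0.
Proof.
move=> topA; apply/eqP; rewrite cards_eq0; apply/eqP/setP => V; rewrite !inE.
apply/negP => /andP[VA /topA]; rewrite vtop_flipc_top topA //.
by case: b {topA}.
Qed.

Lemma card_NAQ_layers n (A : {set vtx n.+1}) :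
  #|NAQ (layer false A)| + #|NAQ (layer true A)| <= #|NAQ A|.
Proof.
by rewrite (card_layers false (NAQ A)) leq_add // subset_leq_card // NAQ_layer.
Qed.

Lemma card_NAQ_one_layer n b (A : {set vtx n.+1}) :
  {in A, forall V, vtop V = b} ->
  #|NAQ (layer b A)| + 2 * #|A| <= #|NAQ A| + #|antipodal (layer b A)|.
Proof.
move=> topA.
rewrite -(card_layer_all topA) -card_setU_antipodes (card_layers b (NAQ A)) addnA leq_add2r.
by rewrite leq_add // subset_leq_card // ?NAQ_layer ?layer_NAQ_opposite.
Qed.

Lemma card_NAQ_lower_bound n (A : {set vtx n}) : 0 < #|A| ->
  4 * #|A| * n + 2 * #|antipodal A| + 6 <= 2 * #|NAQ A| + 3 * #|A| ^ 2 + 5 * #|A|.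
Proof.
elim: n A => [|n IH] A A_gt0.
  have := max_card A; rewrite card_ffun card_ord card_bool expn0.
  have := card_antipodal_le A; lia.
suff one_layer b : {in A, forall V, vtop V = b} ->
    4 * #|A| * n.+1 + 2 * #|antipodal A| + 6 <= 2 * #|NAQ A| + 3 * #|A| ^ 2 + 5 * #|A|.
  have [lF0 | lF_gt0] := posnP #|layer false A|.
    exact/one_layer/card_layer_eq0/lF0.
  have [lT0 | lT_gt0] := posnP #|layer true A|.
    exact/one_layer/card_layer_eq0/lT0.
  (* Here the bound follows from (k0 - 1) (k1 - 1) >= 0 and q(A) <= |A|. *)
  move: (IH _ lF_gt0) (IH _ lT_gt0) (card_NAQ_layers A) (card_antipodal_le A).
  rewrite (card_layers false A) /=.
  move: #|layer false A| #|layer true A| lF_gt0 lT_gt0 => k0 k1 k0_gt0 k1_gt0.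
  move: #|NAQ A| #|NAQ (layer false A)| #|NAQ (layer true A)| => N N0 N1.
  move: #|antipodal A| #|antipodal (layer false A)| #|antipodal (layer true A)|.
  nia.
move=> topA; have := card_NAQ_one_layer topA.
have := IH (layer b A); rewrite (card_layer_all topA) (antipodal_top0 topA).
move: #|A| A_gt0 #|NAQ (layer b A)| #|NAQ A| #|antipodal (layer b A)|.
nia.
Qed.

Theorem lemma2p9 (n : nat) (X Y Z U : vtx n) :
  5 <= n ->
  (* P = (Y, X, Z) is a path of length two *)
  Y != Z -> AQadj Y X -> AQadj X Z ->
  (* U is in N_{AQ_n}(P) *)
  U \in NAQ [set Y; X; Z] ->
  (8 * n - 31 <= #|NAQ [set U; X; Y; Z]|) /\
  (Z = flipc X n -> 8 * n - 29 <= #|NAQ [set U; X; Y; Z]|).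
Proof.
move=> _ neq_YZ /andP[neq_YX _] /andP[neq_XZ _].
rewrite inE !inE !negb_or => /andP[/andP[/andP[neq_UY neq_UX] neq_UZ] _].
set A := [set U; X; Y; Z].
have card_A : #|A| = 4.
  rewrite (_ : A = U |: (X |: (Y |: [set Z]))); last first.
    by apply/setP => v; rewrite !inE !orbA.
  by rewrite !cardsU1 cards1 !inE !negb_or neq_UX neq_UY neq_UZ eq_sym neq_YX neq_XZ neq_YZ.
have := @card_NAQ_lower_bound n A; rewrite card_A => /(_ isT) bound.
split=> [|def_Z]; first lia.
suff : 2 <= #|antipodal A| by lia.
have <- : #|[set X; Z]| = 2 by rewrite cards2 neq_XZ.
apply/subset_leq_card/subsetP => w; rewrite !inE def_Z => /orP[]/eqP->.
  by rewrite !eqxx !(orbT, orTb).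
by rewrite flipcK !eqxx !(orbT, orTb).
Qed.
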